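(* Let $(X,\alpha,T)$ be a dynamical system with $T=\mathbb{Z}$ or $T=\mathbb{R}$ acting by homeomorphisms on a compact metrizable space $X$, and suppose that forward proximality and backward proximality are transitive relations. Then exactly one of the following two cases occurs. Case 1: the following equivalent statements hold: (i) proximality is transitive; (ii) $E$ has a unique minimal left ideal; (iii) $\mathcal M=\mathcal M^+=\mathcal M^-$; (iv) $J^+_{min}=J^-_{min}$. Case 2: the following equivalent statements hold: (i) proximality is not transitive; (ii) $E$ has exactly two minimal left ideals, namely $\mathcal M^+$ and $\mathcal M^-$; (iii) $\mathcal M^+\cap\mathcal M^-=\emptyset$; (iv) $J^+_{min}\cap J^-_{min}=\emptyset$.
   Context: $X$ is a compact metrizable space with metric $d$, $T=\mathbb{Z}$ or $\mathbb{R}$ acts by homeomorphisms $\alpha^t$ with $\alpha^{s+t}=\alpha^s\circ\alpha^t$, $\alpha^0=\mathrm{id}$; $T^+$ and $T^-$ denote the nonnegative and nonpositive elements of $T$. $X^X$ is the semigroup of all maps $X\to X$ under composition with the topology of pointwise convergence. $E=E(X,T)$ is the closure of $\{\alpha^t:t\in T\}$ in $X^X$ and $E^\pm$ is the closure of $\{\alpha^t:t\in T^\pm\}$; these are monoids under composition, each possessing a unique minimal two-sided ideal (kernel), denoted $\mathcal M$, $\mathcal M^+$, $\mathcal M^-$ respectively. An idempotent $p$ ($pp=p$) is minimal if it is minimal for the order $p\le q \iff p=pq=qp$; $J^\pm_{min}$ is the set of minimal idempotents of $E^\pm$. Points $x,y$ are proximal if $\inf_{t\in T}d(\alpha^t x,\alpha^t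 y)=0$, forward proximal if $\inf_{t\in T^+}d(\alpha^t x,\alpha^t y)=0$, backward proximal if $\inf_{t\in T^-}d(\alpha^t x,\alpha^t y)=0$. A left ideal of a semigroup $S$ is a non-empty $I\subset S$ with $SI\subset I$. *)

From HB Require Import structures.
From mathcomp Require Import all_boot all_order all_algebra.
From mathcomp Require Import all_classical all_reals all_analysis.
Set Implicit Arguments.
Unset Strict Implicit.
Unset Printing Implicit Defensive.
Import Order.TTheory GRing.Theory Num.Theory.
Local Open Scope classical_set_scope.
Local Open Scope ring_scope.

Definition left_ideal {X : Type} (S I : set (X -> X)) : Prop :=
  I !=set0 /\ I `<=` S /\ (forall s i, S s -> I i -> I (s \o i)).

Definition two_sided_ideal {X : Type} (S I : set (X -> X)) : Prop :=
  I !=set0 /\ I `<=` S /\ (forall s i, S s -> I i -> I (s \o i)) /\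
  (forall s i, S s -> I i -> I (i \o s)).

Definition minimal_left_ideal {X : Type} (S I : set (X -> X)) : Prop :=
  left_ideal S I /\ (forall J, left_ideal S J -> J `<=` I -> J = I).

Definition minimal_ideal {X : Type} (S I : set (X -> X)) : Prop :=
  two_sided_ideal S I /\ (forall J, two_sided_ideal S J -> J `<=` I -> J = I).

Definition idem_le {X : Type} (p q : X -> X) : Prop :=
  p = p \o q /\ p = q \o p.

Definition min_idempotents {X : Type} (S : set (X -> X)) : set (X -> X) :=
  [set p | S p /\ p \o p = p /\
     (forall q, S q -> q \o q = q -> idem_le q p -> q = p)].

Definition envelope {R : realType} {X : topologicalType}
  (alpha : R -> X -> X) (A : set R) : set (X -> X) :=
  @closure {ptws X -> X} [set (alpha t : {ptws X -> X}) | t in A].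

Definition proximal_on {R : realType} {X : metricType R}
  (alpha : R -> X -> X) (A : set R) (x y : X) : Prop :=
  inf [set mdist (alpha t x) (alpha t y) | t in A] = 0.

Definition transitive_rel {X : Type} (P : X -> X -> Prop) : Prop :=
  forall x y z, P x y -> P y z -> P x z.

Definition Tpos {R : realType} (T : set R) : set R := T `&` [set t | 0 <= t].
Definition Tneg {R : realType} (T : set R) : set R := T `&` [set t | t <= 0].

Definition is_Z_or_R {R : realType} (T : set R) : Prop :=
  T = [set: R] \/ T = [set t | exists z : int, t = z%:~R].

From HB Require Import structures.
From mathcomp Require Import all_boot all_order all_algebra.
From mathcomp Require Import all_classical all_reals all_analysis.
From mathcomp Require Import lra.
Import Order.TTheory GRing.Theory Num.Theory.
Local Open Scope classical_set_scope.
Local Open Scope ring_scope.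

(* For X compact, a closed subsemigroup S of X^X (pointwise topology) has
   minimal left ideals; each is S p for any of its elements p, is closed and
   contains idempotents. Call x, y S-proximal when p x = p y for some p in S;
   by compactness, proximality along a time set A is E(A)-proximality.
   S-proximality is transitive iff S has only one minimal left ideal: given
   minimal left ideals L1, L2 and idempotents u in L1, v in L2 with u v = v,
   transitivity makes u x and v x proximal, both are fixed by u, and points
   fixed by an element of a minimal left ideal are proximal only if equal;
   so u = v and L1 = L2. Hence M^+ and M^- are the unique minimal left ideals
   of E^+ and E^-. As E commutes with the flow and, for each t, alpha^t or
   alpha^-t lies in E^+, M^+ is also a minimal left ideal of E, and so is M^-.
   Since E = E^+ \cup E^-, every minimal left ideal L of E contains some m p
   with p in L and m in M^+ or M^-, hence equals M^+ or M^-. So either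
   M^+ = M^- is the only minimal left ideal of E (Case 1) or M^+ and M^- are
   two disjoint ones (Case 2). *)

Lemma compact_chain_bigcap_neq0 {T : topologicalType} (A : set T)
    (C : set (set T)) :
  compact A -> C !=set0 ->
  (forall B, C B -> [/\ B `<=` A, closed B & B !=set0]) ->
  (forall B B', C B -> C B' -> B `<=` B' \/ B' `<=` B) ->
  \bigcap_(B in C) B !=set0.
Proof.
move=> cA [B0 CB0] CP Ctot.
pose G := filter_from C id.
have G_filter : ProperFilter G.
  apply: filter_from_proper; last by move=> B /CP[].
  apply: filter_from_filter; first by exists B0.
  move=> B B' CB CB'; have [BB'|B'B] := Ctot _ _ CB CB'.
    by exists B => // x Bx; split => //; apply: BB'.
  by exists B' => // x B'x; split => //; apply: B'B.
have [|p [_ clp]] := cA G G_filter; first by exists B0 => //; case: (CP _ CB0).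
exists p => B CB; have [_ clB _] := CP _ CB.
by apply: clB => U pU; apply: clp pU; exists B.
Qed.

Lemma exists_minimal_closed {T : topologicalType} (Q : set T -> Prop)
    (A : set T) :
  compact A -> closed A -> A !=set0 -> Q A ->
  (forall C : set (set T), C !=set0 -> (forall B, C B -> Q B) ->
     Q (\bigcap_(B in C) B)) ->
  exists B, [/\ B `<=` A, closed B, B !=set0, Q B &
    forall B', B' `<=` B -> closed B' -> B' !=set0 -> Q B' -> B' = B].
Proof.
move=> cA clA nA QA Qcap.
pose good B := [/\ B `<=` A, closed B, B !=set0 & Q B].
pose Rsup (a b : {B | good B}) := `[< sval b `<=` sval a >].
have [| | | |m mmax] := @Zorn _ Rsup.
- by move=> a; apply/asboolP.
- by move=> a b c /asboolP ab /asboolP bc; apply/asboolP => x /bc /ab.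
- move=> [a ga] [b gb] /asboolP /= ba /asboolP /= ab.
  by apply: eq_exist; apply/seteqP; split.
- move=> K Ktot.
  have [[k0 Kk0]|nK] := pselect (exists k, K k); last first.
    exists (exist good A (And4 (@subset_refl _ A) clA nA QA)) => k Kk.
    by case: nK; exists k.
  pose C := [set sval k | k in K].
  have CP B : C B -> good B by move=> [k _ <-]; exact: svalP.
  have C_neq0 : C !=set0 by exists (sval k0), k0.
  have gI : good (\bigcap_(B in C) B).
    split.
    - move=> x Cx; have [+ _ _ _] := CP _ (imageP sval Kk0).
      by apply; apply: Cx; exists k0.
    - by apply: closed_bigI => B /CP[].
    - apply: (compact_chain_bigcap_neq0 _ _ cA C_neq0); first by move=> B /CP[].
      move=> _ _ [a Ka <-] [b Kb <-].
      by have [/asboolP|/asboolP] := Ktot a b Ka Kb; [right|left].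
    - by apply: Qcap => // B /CP[].
  exists (exist good _ gI) => k Kk; apply/asboolP => x Cx.
  by apply: Cx; exists k.
- have [mA clm nm Qm] := svalP m; exists (sval m); split => //.
  move=> B' B'm clB' nB' QB'.
  have gB' : good B' by split => // x /B'm /mA.
  by have /(congr1 sval) := mmax (exist good B' gB') (asboolT B'm).
Qed.

Lemma closed_eq_continuous {T U : topologicalType} (f g : T -> U) :
  hausdorff_space U -> continuous f -> continuous g ->
  closed [set x | f x = g x].
Proof.
move=> hU cf cg x clx; apply: hU => A B nA nB.
have N : nbhs x (f @^-1` A `&` g @^-1` B).
  by apply: filterI; [exact: cf | exact: cg].
have [y [fgy [Ay By]]] := clx _ N.
by exists (f y); split => //; rewrite fgy.
Qed.

Definition comp_closed {X : Type} (A : set (X -> X)) :=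
  forall p q, A p -> A q -> A (p \o q).

Definition rcomp_set {X : Type} (A : set (X -> X)) (q : X -> X) :=
  [set a \o q | a in A].

Definition idempotents {X : Type} (A : set (X -> X)) :=
  [set p | A p /\ p \o p = p].

Definition sproximal {X : Type} (S : set (X -> X)) (x y : X) :=
  exists2 p, S p & p x = p y.

Section PointwiseTopology.
Context {X : uniformType}.
Hypothesis X_hausdorff : hausdorff_space X.
Hypothesis X_compact : compact [set: X].
Local Notation F := {ptws X -> X}.

Lemma ptws_hausdorff : hausdorff_space F.
Proof. exact: hausdorff_product. Qed.

Lemma ptws_closed_compact (A : set (X -> X)) : @closed F A -> @compact F A.
Proof.
move=> clA; apply: (@subclosed_compact F _ [set: F] clA) => //.
have := @tychonoff X (fun _ => X) (fun _ => [set: X]) (fun _ => X_compact).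
by congr compact; apply/seteqP; split.
Qed.

Lemma ptws_eval_continuous (x : X) : continuous (fun p : F => p x).
Proof. exact: (@proj_continuous X (fun _ => X) x). Qed.

Lemma ptws_compr_continuous (q : X -> X) :
  continuous (fun p : F => (p \o q : F)).
Proof.
move=> p; apply/(@pointwise_cvgP X X ((fun p : F => (p \o q : F)) @ nbhs p)).
by move=> x; exact: (ptws_eval_continuous (q x) p).
Qed.

Lemma ptws_compl_continuous (f : X -> X) :
  continuous f -> continuous (fun p : F => (f \o p : F)).
Proof.
move=> cf p; apply/(@pointwise_cvgP X X ((fun p : F => (f \o p : F)) @ nbhs p)).
by move=> x; apply: (continuous_comp (ptws_eval_continuous x p)); exact: cf.
Qed.

Lemma closed_rcomp_set (A : set (X -> X)) (q : X -> X) :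
  @closed F A -> @closed F (rcomp_set A q).
Proof.
move=> clA; apply: (compact_closed ptws_hausdorff).
apply: (@continuous_compact F F (fun p : F => (p \o q : F))).
  exact/continuous_subspaceT/ptws_compr_continuous.
exact: ptws_closed_compact.
Qed.

Lemma closed_compr_eq (q r : X -> X) :
  @closed F [set p : X -> X | p \o q = r].
Proof.
exact: (closed_eq_continuous _ _ ptws_hausdorff (ptws_compr_continuous q)
  (@cst_continuous F F r)).
Qed.

(* Ellis-Numakura: in a minimal closed subsemigroup B containing a, both B a
   and [set b in B | b a = a] are closed subsemigroups, hence equal to B. *)
Lemma exists_idempotent (A : set (X -> X)) :
  @closed F A -> A !=set0 -> comp_closed A -> exists2 u, A u & u \o u = u.
Proof.
move=> clA nA cA.
have [B [BA clB [a Ba] cB minB]] := @exists_minimal_closed F comp_closed A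
  (ptws_closed_compact _ clA) clA nA cA
  (fun C _ hC p q pC qC B CB => hC B CB p q (pC B CB) (qC B CB)).
have Ba_eq : rcomp_set B a = B.
  apply: minB.
  - by move=> _ [b Bb <-]; exact: cB.
  - exact: closed_rcomp_set.
  - by exists (a \o a), a.
  - move=> _ _ [b Bb <-] [b' Bb' <-]; exists (b \o a \o b') => //.
    by apply: (cB) => //; exact: cB.
have [b Bb ba] : exists2 b, B b & b \o a = a by rewrite -Ba_eq in Ba.
have W_eq : B `&` [set b : X -> X | b \o a = a] = B.
  apply: minB.
  - by move=> ? [].
  - exact: (closedI clB (closed_compr_eq a a)).
  - by exists b.
  - move=> p q [Bp pa] [Bq qa]; split; first exact: cB.
    by rewrite /= -compA qa pa.
have [_ aa] : (B `&` [set b : X -> X | b \o a = a]) a by rewrite W_eq.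
by exists a => //; exact: BA.
Qed.

End PointwiseTopology.

Section MinimalLeftIdeals.
Context {X : uniformType}.
Hypothesis X_hausdorff : hausdorff_space X.
Hypothesis X_compact : compact [set: X].
Local Notation F := {ptws X -> X}.
Context {S : set (X -> X)}.
Hypothesis S_closed : @closed F S.
Hypothesis S_comp : comp_closed S.
Local Notation minL := (minimal_left_ideal S).

Lemma left_ideal_rcomp_set p : S p -> left_ideal S (rcomp_set S p).
Proof.
move=> Sp; split; first by exists (p \o p), p.
split; first by move=> _ [s Ss <-]; exact: S_comp.
by move=> s _ Ss [s' Ss' <-]; exists (s \o s') => //; exact: S_comp.
Qed.

Lemma exists_minimal_left_ideal I :
  left_ideal S I -> exists2 L, minL L & L `<=` I.
Proof.
move=> [[i Ii] [IS I_ideal]].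
pose Q (B : set (X -> X)) := B `<=` S /\ forall s b, S s -> B b -> B (s \o b).
have QS p : S p -> Q (rcomp_set S p) by move=> /left_ideal_rcomp_set[_].
have Qcap (C : set (set F)) : C !=set0 -> (forall B, C B -> Q B) ->
    Q (\bigcap_(B in C) B).
  move=> [B0 CB0] CQ; split; first by move=> p Cp; apply: (CQ _ CB0).1 (Cp _ _).
  by move=> s b Ss Cb B CB; apply: (CQ _ CB).2 (Cb _ _).
have Sp_closed p : @closed F (rcomp_set S p).
  exact: closed_rcomp_set.
have [B [BSi clB nB [BS B_ideal] minB]] := @exists_minimal_closed F Q _
  (ptws_closed_compact X_compact _ (Sp_closed i)) (Sp_closed i)
  (ex_intro _ (i \o i) (ex_intro2 _ _ i (IS i Ii) erefl)) (QS i (IS i Ii)) Qcap.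
exists B; last by move=> _ /BSi[s Ss <-]; exact: I_ideal.
split=> // J [[j Jj] [JS J_ideal]] JB.
have Sj_eq : rcomp_set S j = B.
  apply: minB => //.
  - by move=> _ [s Ss <-]; apply: JB; exact: J_ideal.
  - by exists (j \o j), j => //; exact: JS.
  - exact: QS (JS j Jj).
by apply/seteqP; split => //; rewrite -Sj_eq => _ [s Ss <-]; exact: J_ideal.
Qed.

Lemma minimal_left_idealE {L p} : minL L -> L p -> rcomp_set S p = L.
Proof.
move=> [[_ [LS L_ideal]] minl] Lp; apply: minl.
  exact/left_ideal_rcomp_set/LS.
by move=> _ [s Ss <-]; exact: L_ideal.
Qed.

Lemma minimal_left_ideal_closed {L} : minL L -> @closed F L.
Proof.
move=> mL; have [[p Lp] _] := mL.1; rewrite -(minimal_left_idealE mL Lp).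
exact: closed_rcomp_set.
Qed.

Lemma minimal_left_ideal_idempotent {L} :
  minL L -> exists2 u, L u & u \o u = u.
Proof.
move=> mL; have [[nL [LS L_ideal]] _] := mL.
apply: (exists_idempotent X_hausdorff X_compact) => //.
  exact: minimal_left_ideal_closed.
by move=> p q Lp Lq; apply: L_ideal => //; exact: LS.
Qed.

Lemma idempotent_right_unit {L u w} :
  minL L -> L u -> u \o u = u -> L w -> w \o u = w.
Proof.
move=> mL Lu uu; rewrite -(minimal_left_idealE mL Lu) => -[s _ <-].
by rewrite -compA uu.
Qed.

Lemma minimal_left_ideal_eq {L1 L2 p} :
  minL L1 -> minL L2 -> L1 p -> L2 p -> L1 = L2.
Proof.
move=> mL1 mL2 L1p L2p.
by rewrite -(minimal_left_idealE mL1 L1p) (minimal_left_idealE mL2 L2p).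
Qed.

Lemma minimal_left_ideal_rcomp_set {L s} :
  minL L -> S s -> minL (rcomp_set L s).
Proof.
move=> [[[l0 Ll0] [LS L_ideal]] minl] Ss.
have Ls_ideal : left_ideal S (rcomp_set L s).
  split; first by exists (l0 \o s), l0.
  split; first by move=> _ [l Ll <-]; apply: S_comp => //; exact: LS.
  by move=> s' _ Ss' [l Ll <-]; exists (s' \o l) => //; exact: L_ideal.
split => // J [[j Jj] [JS J_ideal]] JLs.
have K_eq : [set l | L l /\ J (l \o s)] = L.
  apply: minl; last by move=> ? [].
  have [l Ll ls] := JLs j Jj.
  split; first by exists l; split => //; rewrite ls.
  split; first by move=> ? [? _]; exact: LS.
  move=> s' l' Ss' [Ll' Jl']; split; first exact: L_ideal.
  exact: (J_ideal s' (l' \o s)).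
apply/seteqP; split => // _ [l Ll <-].
by have [] : [set l | L l /\ J (l \o s)] l by rewrite K_eq.
Qed.

Lemma minimal_left_ideals_disjoint {L1 L2} :
  minL L1 -> minL L2 -> L1 `&` L2 = set0 <-> L1 <> L2.
Proof.
move=> mL1 mL2; split.
  move=> + L12; have [[p L1p] _] := mL1.1.
  by rewrite -L12 setIid => /seteqP[/(_ p L1p)].
move=> L12; apply/seteqP; split => // p [L1p L2p].
exact: L12 (minimal_left_ideal_eq mL1 mL2 L1p L2p).
Qed.

Lemma minimal_left_ideal_idempotents_eq {L1 L2} :
  minL L1 -> minL L2 -> idempotents L1 = idempotents L2 <-> L1 = L2.
Proof.
move=> mL1 mL2; split => [J12|-> //].
have [u L1u uu] := minimal_left_ideal_idempotent mL1.
have [L2u _] : idempotents L2 u by rewrite -J12.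
exact: minimal_left_ideal_eq L1u L2u.
Qed.

Lemma minimal_left_ideal_idempotents_disjoint {L1 L2} :
  minL L1 -> minL L2 -> idempotents L1 `&` idempotents L2 = set0 <-> L1 <> L2.
Proof.
move=> mL1 mL2; split.
  move=> + L12; have [u L1u uu] := minimal_left_ideal_idempotent mL1.
  by rewrite -L12 setIid => /seteqP[/(_ u (conj L1u uu))].
move=> L12; apply/seteqP; split => // p [[L1p _] [L2p _]].
exact: L12 (minimal_left_ideal_eq mL1 mL2 L1p L2p).
Qed.

(* As S (p \o u) = L contains u, we have u = s \o p \o u for some s in S. *)
Lemma sproximal_fixed_eq {L u y z} :
  minL L -> L u -> u y = y -> u z = z -> sproximal S y z -> y = z.
Proof.
move=> mL Lu uy uz [p Sp pyz]; have [[_ [_ L_ideal]] _] := mL.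
have : rcomp_set S (p \o u) u.
  by rewrite (minimal_left_idealE mL (L_ideal _ _ Sp Lu)).
by move=> [s _ spu]; rewrite -uy -uz -spu /= uy uz pyz.
Qed.

Lemma exists_idempotent_left_unit {L1 L2 v} :
  minL L1 -> minL L2 -> L2 v -> exists2 u, idempotents L1 u & u \o v = v.
Proof.
move=> mL1 mL2 L2v; have [[[l Ll] [L1S L1_ideal]] _] := mL1.
have [[_ [L2S L2_ideal]] _] := mL2.
have L1v_eq : rcomp_set L1 v = L2.
  apply: (minimal_left_ideal_eq (minimal_left_ideal_rcomp_set mL1 (L2S v L2v))
    mL2 (p := l \o v)); first by exists l.
  by apply: L2_ideal => //; exact: L1S.
pose W := L1 `&` [set p : X -> X | p \o v = v].
have W_closed : @closed F W.
  apply: closedI; first exact: minimal_left_ideal_closed mL1.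
  exact: closed_compr_eq.
have W_neq0 : W !=set0 by rewrite -L1v_eq in L2v; case: L2v => q; exists q.
have W_comp : comp_closed W.
  move=> p p' [L1p pv] [L1p' p'v]; split.
    by apply: L1_ideal => //; exact: L1S.
  by rewrite /= -compA p'v pv.
have [u [L1u uv] uu] := exists_idempotent X_hausdorff X_compact _ W_closed
  W_neq0 W_comp.
by exists u.
Qed.

Lemma sproximal_trans_minimal_left_ideal_eq {L1 L2} :
  transitive_rel (sproximal S) -> minL L1 -> minL L2 -> L1 = L2.
Proof.
move=> S_trans mL1 mL2.
have [v L2v vv] := minimal_left_ideal_idempotent mL2.
have [u [L1u uu] uv] := exists_idempotent_left_unit mL1 mL2 L2v.
have [[_ [L1S _]] _] := mL1; have [[_ [L2S _]] _] := mL2.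
suff uv_eq : u = v by apply: (minimal_left_ideal_eq mL1 mL2 L1u); rewrite uv_eq.
apply: funext => x; apply: (sproximal_fixed_eq mL1 L1u).
- exact: (congr1 (@^~ x) uu).
- exact: (congr1 (@^~ x) uv).
- apply: (S_trans _ x).
    by exists u; [exact: L1S | exact: (congr1 (@^~ x) uu)].
  by exists v; [exact: L2S | exact: (esym (congr1 (@^~ x) vv))].
Qed.

Section UniqueMinimalLeftIdeal.
Variable L : set (X -> X).
Hypothesis L_min : minL L.
Hypothesis L_unique : forall L', minL L' -> L' = L.

Lemma unique_minimal_left_ideal_rcomp_setE {s} : S s -> rcomp_set L s = L.
Proof. by move=> Ss; apply: L_unique; exact: minimal_left_ideal_rcomp_set. Qed.

Lemma unique_minimal_left_ideal_rcomp l s : L l -> S s -> L (l \o s).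
Proof.
by move=> Ll Ss; rewrite -(unique_minimal_left_ideal_rcomp_setE Ss); exists l.
Qed.

Lemma unique_minimal_left_ideal_sproximal_trans :
  transitive_rel (sproximal S).
Proof.
have [u Lu uu] := minimal_left_ideal_idempotent L_min.
have [[_ [LS _]] _] := L_min.
have u_eq x y : sproximal S x y -> u x = u y.
  move=> [p Sp pxy].
  have : rcomp_set L p u by rewrite (unique_minimal_left_ideal_rcomp_setE Sp).
  by move=> [l _ <-] /=; rewrite pxy.
move=> x y z /u_eq uxy /u_eq uyz; exists u; first exact: LS.
by rewrite uxy uyz.
Qed.

Lemma minimal_ideal_unique_minimal_left_ideal M : minimal_ideal S M -> M = L.
Proof.
move=> [[[m Mm] [MS [M_lideal M_rideal]]] minM].
have [[[l Ll] [LS L_ideal]] _] := L_min.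
have LM : L `<=` M.
  have lm : L (l \o m).
    by apply: unique_minimal_left_ideal_rcomp => //; exact: MS.
  rewrite -(minimal_left_idealE L_min lm) => _ [s Ss <-].
  by apply: (M_lideal) => //; apply: M_lideal => //; exact: LS.
apply/esym/minM => //; split; first by exists l.
by split => //; split => // s l' Ss Ll'; exact: unique_minimal_left_ideal_rcomp.
Qed.

(* A minimal idempotent p dominates the idempotent p \o u of L, where u is any
   idempotent of L; since u \o p = u, the two coincide. *)
Lemma min_idempotents_unique : min_idempotents S = idempotents L.
Proof.
have [[_ [LS L_ideal]] _] := L_min.
apply/seteqP; split.
- move=> p [Sp [pp pmin]].
  have [u Lu uu] := minimal_left_ideal_idempotent L_min.
  have up : u \o p = u.
    have : rcomp_set L p u by rewrite (unique_minimal_left_ideal_rcomp_setE Sp).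
    by move=> [l _ <-]; rewrite -compA pp.
  have Lpu : L (p \o u) by exact: L_ideal.
  have pu_idem : (p \o u) \o (p \o u) = p \o u.
    by rewrite compA -(compA p u p) up -compA uu.
  have pu_le : idem_le (p \o u) p.
    by split; [rewrite -compA up | rewrite compA pp].
  by rewrite -(pmin _ (LS _ Lpu) pu_idem pu_le).
- move=> p [Lp pp]; split; first exact: LS.
  split => // q Sq qq [qpq qqp].
  have Lq : L q by rewrite qqp; exact: unique_minimal_left_ideal_rcomp.
  by rewrite qqp (idempotent_right_unit L_min Lq qq Lp).
Qed.

End UniqueMinimalLeftIdeal.

Lemma sproximal_trans_unique_minimal_left_ideal M :
  transitive_rel (sproximal S) -> minimal_ideal S M ->
  minL M /\ forall L, minL L -> L = M.
Proof.
move=> S_trans hM; have [[[m Mm] [MS _]] _] := hM.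
have [L mL _] : exists2 L, minL L & L `<=` S.
  apply: exists_minimal_left_ideal; split; first by exists m; exact: MS.
  by split => // s p Ss Sp; exact: S_comp.
have L_unique L' : minL L' -> L' = L.
  by move=> mL'; exact: sproximal_trans_minimal_left_ideal_eq.
by rewrite (minimal_ideal_unique_minimal_left_ideal _ mL L_unique _ hM).
Qed.

End MinimalLeftIdeals.

Section Proximality.
Context {R : realType} {X : metricType R}.
Hypothesis X_compact : compact [set: X].
Local Notation F := {ptws X -> X}.
Variables (alpha : R -> X -> X) (A : set R).

Lemma nbhs_ptws_mdist (p : F) (x : X) (e : R) :
  0 < e -> nbhs p [set q : F | mdist (p x) (q x) < e].
Proof.
move=> e0; have := ptws_eval_continuous x p _ (nbhsx_ballx (p x) e e0).
by rewrite ballEmdist.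
Qed.

(* The closures K e of the sets of alpha t with d(alpha t x, alpha t y) < e
   form a chain of nonempty closed sets; a point of their intersection
   identifies x and y. *)
Lemma proximal_on_sproximal x y :
  A !=set0 -> proximal_on alpha A x y -> sproximal (envelope alpha A) x y.
Proof.
move=> [t0 At0] inf0.
pose D := [set mdist (alpha t x) (alpha t y) | t in A].
pose K e : set F := closure [set (alpha t : F) | t in
  [set t | A t /\ mdist (alpha t x) (alpha t y) < e]].
have K_env e : K e `<=` envelope alpha A.
  by apply: closureS => _ [t [At _] <-]; exists t.
have K_neq0 e : 0 < e -> K e !=set0.
  move=> e0; have := @inf_lt _ D e (ex_intro _ _ (imageP _ At0)).
  rewrite [inf D]inf0 => /(_ e0)[_ [t At <-] dt].
  by exists (alpha t); apply: subset_closure; exists t.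
have K_mono d d' : d <= d' -> K d `<=` K d'.
  move=> dd'; apply: closureS => _ [t [At dt] <-].
  by exists t => //; split => //; lra.
have [p Kp] : \bigcap_(B in [set K e | e in [set e | 0 < e]]) B !=set0.
  apply: (@compact_chain_bigcap_neq0 F (envelope alpha A)).
  - exact/ptws_closed_compact/closed_closure.
  - by exists (K 1), 1 => //; rewrite /mkset ltr01.
  - move=> _ [e e0 <-].
    by split; [exact: K_env | exact: closed_closure | exact: K_neq0].
  - move=> _ _ [e _ <-] [e' _ <-].
    by have [ee'|/ltW e'e] := leP e e'; [left|right]; exact: K_mono.
have {}Kp e : 0 < e -> K e p by move=> e0; apply: Kp; exists e.
exists p; first exact/K_env/Kp/ltr01.
apply/eqP/negPn; rewrite -mdist_gt0; apply/negP => r0.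
set r := mdist (p x) (p y) in r0 *.
have e0 : 0 < r / 3 by rewrite divr_gt0.
have [_ [[t [_ dt] <-] [/= dx dy]]] := Kp _ e0 _
  (filterI (nbhs_ptws_mdist p x _ e0) (nbhs_ptws_mdist p y _ e0)).
have := metric_triangle (p x) (alpha t x) (p y).
have := metric_triangle (alpha t x) (alpha t y) (p y).
rewrite (metric_sym (alpha t y) (p y)) -/r; lra.
Qed.

Lemma sproximal_proximal_on x y :
  sproximal (envelope alpha A) x y -> proximal_on alpha A x y.
Proof.
move=> [p Ep pxy].
pose D := [set mdist (alpha t x) (alpha t y) | t in A].
have D_lb : lbound D 0 by move=> _ [t _ <-]; exact: mdist_ge0.
have [_ [[t At <-] _]] := Ep _ (nbhs_ptws_mdist p x _ ltr01).
apply/eqP; rewrite eq_le; apply/andP; split; last first.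
  by apply: lb_le_inf => //; exists (mdist (alpha t x) (alpha t y)), t.
apply/ler_addgt0Pr => e e0; rewrite add0r.
have e20 : 0 < e / 2 by rewrite divr_gt0.
have [_ [[s As <-] [/= dx dy]]] := Ep _
  (filterI (nbhs_ptws_mdist p x _ e20) (nbhs_ptws_mdist p y _ e20)).
apply: (le_trans (ge_inf (ex_intro _ 0 D_lb) (imageP _ As))).
have := metric_triangle (alpha s x) (p y) (alpha s y).
rewrite -pxy in dy *; rewrite (metric_sym (alpha s x) (p x)); lra.
Qed.

Lemma proximal_onE :
  A !=set0 -> proximal_on alpha A = sproximal (envelope alpha A).
Proof.
move=> A_neq0; apply/funext => x; apply/funext => y; apply/propext.
by split; [exact: proximal_on_sproximal | exact: sproximal_proximal_on].
Qed.

End Proximality.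

Definition half_of {R : realType} (T A : set R) :=
  [/\ A `<=` T, A 0, (forall s t, A s -> A t -> A (s + t)) &
      forall t, T t -> A t \/ A (- t)].

Section TimeSet.
Context {R : realType} {T : set R}.
Hypothesis T_Z_or_R : is_Z_or_R T.

Lemma is_Z_or_R_0 : T 0.
Proof. by case: T_Z_or_R => ->; last exists 0%Z. Qed.

Lemma is_Z_or_R_add s t : T s -> T t -> T (s + t).
Proof.
by case: T_Z_or_R => -> //= [a ->] [b ->]; exists (a + b)%Z; rewrite intrD.
Qed.

Lemma is_Z_or_R_opp t : T t -> T (- t).
Proof. by case: T_Z_or_R => -> //= [a ->]; exists (- a)%Z; rewrite intrN. Qed.

Lemma Tpos_half : half_of T (Tpos T).
Proof.
split; [by move=> t [] | by split; [exact: is_Z_or_R_0 | rewrite /mkset] | |].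
- move=> s t [Ts s0] [Tt t0]; split; first exact: is_Z_or_R_add.
  exact: addr_ge0.
- move=> t Tt; have [t0|t0] := leP 0 t; [left|right]; split => //.
    exact: is_Z_or_R_opp.
  by rewrite /mkset oppr_ge0 ltW.
Qed.

Lemma Tneg_half : half_of T (Tneg T).
Proof.
split; [by move=> t [] | by split; [exact: is_Z_or_R_0 | rewrite /mkset] | |].
- move=> s t [Ts s0] [Tt t0]; split; first exact: is_Z_or_R_add.
  by rewrite /mkset in s0 t0 *; lra.
- move=> t Tt; have [t0|t0] := leP t 0; [left|right]; split => //.
    exact: is_Z_or_R_opp.
  by rewrite /mkset oppr_le0 ltW.
Qed.

End TimeSet.

Section Envelope.
Context {R : realType} {X : uniformType}.
Local Notation F := {ptws X -> X}.
Context {T : set R} {alpha : R -> X -> X}.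
Hypothesis alpha_continuous : forall t, T t -> continuous (alpha t).
Hypothesis alpha_add :
  forall s t, T s -> T t -> alpha (s + t) = alpha s \o alpha t.
Local Notation E A := (envelope alpha A).

Lemma envelope_closed A : @closed F (E A).
Proof. exact: closed_closure. Qed.

Lemma envelope_alpha {A t} : A t -> E A (alpha t).
Proof. by move=> At; apply: subset_closure; exists t. Qed.

Lemma envelope_subset {A B} : A `<=` B -> E A `<=` E B.
Proof.
by move=> AB; apply: (@closureS F) => _ [t At <-]; exists t => //; exact: AB.
Qed.

Lemma envelope_ind A (C : set (X -> X)) :
  @closed F C -> (forall t, A t -> C (alpha t)) -> E A `<=` C.
Proof.
move=> clC AC p Ep; apply: clC; apply: (@closureS F _ C _ p Ep).
by move=> _ [t At <-]; exact: AC.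
Qed.

Lemma envelope_comp_closed A :
  A `<=` T -> (forall s t, A s -> A t -> A (s + t)) -> comp_closed (E A).
Proof.
move=> AT A_add p q Ep Eq.
have alpha_comp s : A s -> E A (alpha s \o q).
  move=> As; move: q Eq; apply: envelope_ind.
    apply: (continuous_closedP _).1 (envelope_closed A).
    exact/ptws_compl_continuous/alpha_continuous/AT.
  move=> t At /=; rewrite -alpha_add; [|exact: AT|exact: AT].
  by apply: envelope_alpha; exact: A_add.
move: p Ep; apply: envelope_ind => //.
exact: (continuous_closedP _).1 (ptws_compr_continuous q) _ (envelope_closed A).
Qed.

Lemma envelope_commute {t p} :
  hausdorff_space X -> T t -> E T p -> alpha t \o p = p \o alpha t.
Proof.
move=> X_hausdorff Tt Ep; apply: funext => x; move: p Ep x.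
suff : E T `<=` \bigcap_x [set q | alpha t (q x) = q (alpha t x)].
  by move=> + p Ep x; apply.
apply: envelope_ind.
  apply: closed_bigI => x _; apply: closed_eq_continuous => //.
    move=> q; apply: (continuous_comp (ptws_eval_continuous x q)).
    exact: alpha_continuous.
  exact: ptws_eval_continuous.
move=> s Ts x _ /=; rewrite -[alpha t (alpha s x)]/((alpha t \o alpha s) x).
by rewrite -alpha_add // addrC alpha_add.
Qed.

Lemma envelope_split : E T = E (Tpos T) `|` E (Tneg T).
Proof.
rewrite /envelope -(@closureU F); congr (@closure F _); apply/seteqP; split.
  move=> _ [t Tt <-]; have [t0|t0] := leP 0 t; first by left; exists t.
  by right; exists t => //; split => //; rewrite /mkset ltW.
by move=> _ [[t [Tt _] <-]|[t [Tt _] <-]]; exists t.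
Qed.

End Envelope.

Section OneSidedKernel.
Context {R : realType} {X : uniformType}.
Hypothesis X_hausdorff : hausdorff_space X.
Hypothesis X_compact : compact [set: X].
Local Notation F := {ptws X -> X}.
Context {T A : set R} {alpha : R -> X -> X}.
Hypothesis alpha_continuous : forall t, T t -> continuous (alpha t).
Hypothesis alpha0 : alpha 0 = id.
Hypothesis alpha_add :
  forall s t, T s -> T t -> alpha (s + t) = alpha s \o alpha t.
Hypothesis A_half : half_of T A.
Local Notation E A := (envelope alpha A).

Let AT : A `<=` T. Proof. by case: A_half. Qed.

Let EA_closed : @closed F (E A). Proof. exact: envelope_closed. Qed.

Let EA_comp : comp_closed (E A).
Proof.
case: A_half => _ _ A_add _.
exact: (envelope_comp_closed alpha_continuous alpha_add _ AT A_add).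
Qed.

Section UniqueKernel.
Variable M : set (X -> X).
Hypothesis M_min : minimal_left_ideal (E A) M.
Hypothesis M_unique : forall L, minimal_left_ideal (E A) L -> L = M.

(* If A (- t), write m = m' \o alpha (- t) and let alpha t commute past m'. *)
Lemma alpha_comp_unique_kernel t m : T t -> M m -> M (alpha t \o m).
Proof.
move=> Tt Mm; have [[_ [MA M_ideal]] _] := M_min; have [_ _ _ A_sym] := A_half.
case: (A_sym t Tt) => At; first exact/M_ideal/Mm/envelope_alpha.
have : rcomp_set M (alpha (- t)) m.
  by rewrite (unique_minimal_left_ideal_rcomp_setE EA_comp _ M_min M_unique
    (envelope_alpha At)).
move=> [m' Mm' <-].
have Em' : E T m' := envelope_subset AT _ (MA _ Mm').
rewrite compA (envelope_commute alpha_continuous alpha_add X_hausdorff Tt Em').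
by rewrite -compA -alpha_add ?subrr ?alpha0 //; exact: AT.
Qed.

Lemma unique_kernel_minimal_left_ideal : minimal_left_ideal (E T) M.
Proof.
have [[M_neq0 [MA _]] minM] := M_min.
have M_closed := minimal_left_ideal_closed X_hausdorff X_compact EA_closed
  EA_comp M_min.
have ET_comp p m : E T p -> M m -> M (p \o m).
  move=> Ep Mm; move: p Ep; apply: envelope_ind.
    exact: (continuous_closedP _).1 (ptws_compr_continuous m) _ M_closed.
  by move=> t Tt; exact: alpha_comp_unique_kernel.
split; first by split => //; split => // m /MA; exact: envelope_subset.
move=> J [J_neq0 [JET J_ideal]] JM; apply: minM => //.
split => //; split => [j /JM /MA //|s j As Jj].
by apply: J_ideal => //; exact: envelope_subset AT _ As.
Qed.

End UniqueKernel.

Lemma half_kernel_spec M :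
  minimal_ideal (E A) M -> transitive_rel (sproximal (E A)) ->
  [/\ minimal_left_ideal (E T) M,
      (forall m p, M m -> E A p -> M (m \o p)) &
      min_idempotents (E A) = idempotents M].
Proof.
move=> hM A_trans.
have [M_min M_unique] := sproximal_trans_unique_minimal_left_ideal X_hausdorff
  X_compact EA_closed EA_comp _ A_trans hM.
split; first exact: unique_kernel_minimal_left_ideal.
  by move=> m p; exact: unique_minimal_left_ideal_rcomp.
exact: min_idempotents_unique.
Qed.

End OneSidedKernel.

Section TwoHalves.
Context {X : uniformType}.
Hypothesis X_hausdorff : hausdorff_space X.
Hypothesis X_compact : compact [set: X].
Local Notation F := {ptws X -> X}.
Context {E Ep Em Mp Mm : set (X -> X)}.
Hypothesis E_closed : @closed F E.
Hypothesis E_comp : comp_closed E.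
Hypothesis E_split : E = Ep `|` Em.
Hypothesis Mp_min : minimal_left_ideal E Mp.
Hypothesis Mm_min : minimal_left_ideal E Mm.
Hypothesis Mp_rideal : forall m p, Mp m -> Ep p -> Mp (m \o p).
Hypothesis Mm_rideal : forall m p, Mm m -> Em p -> Mm (m \o p).
Local Notation minL := (minimal_left_ideal E).

Lemma minimal_left_ideal_halves L : minL L <-> L = Mp \/ L = Mm.
Proof.
split; last by case=> ->.
move=> mL; have [[[p Lp] [LE L_ideal]] _] := mL.
have [[[mp Mp_mp] [MpE _]] _] := Mp_min.
have [[[mm Mm_mm] [MmE _]] _] := Mm_min.
have := LE p Lp; rewrite E_split => -[Ep_p|Em_p]; [left|right].
- apply: (minimal_left_ideal_eq E_comp mL Mp_min (p := mp \o p)).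
    by apply: L_ideal => //; exact: MpE.
  exact: Mp_rideal.
- apply: (minimal_left_ideal_eq E_comp mL Mm_min (p := mm \o p)).
    by apply: L_ideal => //; exact: MmE.
  exact: Mm_rideal.
Qed.

Lemma halves_eq_unique : Mp = Mm -> forall L, minL L -> L = Mp.
Proof. by move=> MpMm L /minimal_left_ideal_halves[|]; rewrite -?MpMm. Qed.

Lemma sproximal_trans_halves : transitive_rel (sproximal E) <-> Mp = Mm.
Proof.
split => [E_trans|/halves_eq_unique Mp_unique].
  exact: (sproximal_trans_minimal_left_ideal_eq X_hausdorff X_compact E_closed
    E_comp E_trans Mp_min Mm_min).
exact: (unique_minimal_left_ideal_sproximal_trans X_hausdorff X_compact
  E_closed E_comp _ Mp_min Mp_unique).
Qed.

Lemma unique_minimal_left_ideal_halves : (exists! L, minL L) <-> Mp = Mm.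
Proof.
split => [[L [_ L_unique]]|MpMm].
  by rewrite -(L_unique _ Mp_min) -(L_unique _ Mm_min).
by exists Mp; split => // L /(halves_eq_unique MpMm).
Qed.

Lemma minimal_ideal_halves M :
  minimal_ideal E M -> (M = Mp /\ Mp = Mm) <-> Mp = Mm.
Proof.
move=> hM; split => [[] //|MpMm]; split => //.
exact: (minimal_ideal_unique_minimal_left_ideal E_comp _ Mp_min
  (halves_eq_unique MpMm) _ hM).
Qed.

Lemma two_minimal_left_ideals_halves :
  (Mp <> Mm /\ forall L, minL L <-> L = Mp \/ L = Mm) <-> Mp <> Mm.
Proof.
by split=> [[]|MpMm] //; split => // L; exact: minimal_left_ideal_halves.
Qed.

End TwoHalves.

Theorem theorem3p9 (R : realType) (X : metricType R) (T : set R)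
  (alpha : R -> X -> X) (M Mp Mm : set (X -> X)) :
  compact [set: X] ->
  is_Z_or_R T ->
  (forall t, T t -> continuous (alpha t)) ->
  alpha 0 = id ->
  (forall s t, T s -> T t -> alpha (s + t) = alpha s \o alpha t) ->
  minimal_ideal (envelope alpha T) M ->
  minimal_ideal (envelope alpha (Tpos T)) Mp ->
  minimal_ideal (envelope alpha (Tneg T)) Mm ->
  transitive_rel (proximal_on alpha (Tpos T)) ->
  transitive_rel (proximal_on alpha (Tneg T)) ->
  let E := envelope alpha T in
  let c1i := transitive_rel (proximal_on alpha T) in
  let c1ii := exists! L, minimal_left_ideal E L in
  let c1iii := M = Mp /\ Mp = Mm in
  let c1iv := min_idempotents (envelope alpha (Tpos T)) =
              min_idempotents (envelope alpha (Tneg T)) in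
  let c2i := ~ transitive_rel (proximal_on alpha T) in
  let c2ii := Mp <> Mm /\
              (forall L, minimal_left_ideal E L <-> (L = Mp \/ L = Mm)) in
  let c2iii := Mp `&` Mm = set0 in
  let c2iv := min_idempotents (envelope alpha (Tpos T)) `&`
              min_idempotents (envelope alpha (Tneg T)) = set0 in
  ((c1i <-> c1ii) /\ (c1i <-> c1iii) /\ (c1i <-> c1iv)) /\
  ((c2i <-> c2ii) /\ (c2i <-> c2iii) /\ (c2i <-> c2iv)) /\
  (((c1i /\ c1ii /\ c1iii /\ c1iv) /\ ~ (c2i /\ c2ii /\ c2iii /\ c2iv)) \/
   ((c2i /\ c2ii /\ c2iii /\ c2iv) /\ ~ (c1i /\ c1ii /\ c1iii /\ c1iv))).
Proof.
move=> X_compact T_Z_or_R alpha_cont alpha0 alpha_add hM hMp hMm trp trm E.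
have X_hausdorff : hausdorff_space X := @metric_hausdorff R X.
have half_neq0 A : half_of T A -> A !=set0 by case=> _ A0 _ _; exists 0.
have [Tp_half Tm_half] := (Tpos_half T_Z_or_R, Tneg_half T_Z_or_R).
have T_neq0 : T !=set0 by exists 0; exact: is_Z_or_R_0.
rewrite (proximal_onE X_compact _ _ (half_neq0 _ Tp_half)) in trp.
rewrite (proximal_onE X_compact _ _ (half_neq0 _ Tm_half)) in trm.
rewrite (proximal_onE X_compact _ _ T_neq0).
have [Mp_min Mp_rideal Jp] := half_kernel_spec X_hausdorff X_compact alpha_cont
  alpha0 alpha_add Tp_half _ hMp trp.
have [Mm_min Mm_rideal Jm] := half_kernel_spec X_hausdorff X_compact alpha_cont
  alpha0 alpha_add Tm_half _ hMm trm.
have E_closed : closed (E : set {ptws X -> X}) := envelope_closed T.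
have E_comp : comp_closed E := envelope_comp_closed alpha_cont alpha_add T
  (@subset_refl _ T) (is_Z_or_R_add T_Z_or_R).
have E_split : E = _ `|` _ := envelope_split.
move=> c1i c1ii c1iii c1iv c2i c2ii c2iii c2iv.
have c1i_iff : c1i <-> Mp = Mm := sproximal_trans_halves X_hausdorff X_compact
  E_closed E_comp E_split Mp_min Mm_min Mp_rideal Mm_rideal.
have c1ii_iff : c1ii <-> Mp = Mm := unique_minimal_left_ideal_halves E_comp
  E_split Mp_min Mm_min Mp_rideal Mm_rideal.
have c1iii_iff : c1iii <-> Mp = Mm := minimal_ideal_halves E_comp E_split
  Mp_min Mm_min Mp_rideal Mm_rideal _ hM.
have c1iv_iff : c1iv <-> Mp = Mm.
  by rewrite /c1iv Jp Jm; exact: (minimal_left_ideal_idempotents_eq X_hausdorff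
    X_compact E_closed E_comp Mp_min Mm_min).
have c2ii_iff : c2ii <-> Mp <> Mm := two_minimal_left_ideals_halves E_comp
  E_split Mp_min Mm_min Mp_rideal Mm_rideal.
have c2iii_iff : c2iii <-> Mp <> Mm :=
  minimal_left_ideals_disjoint E_comp Mp_min Mm_min.
have c2iv_iff : c2iv <-> Mp <> Mm.
  by rewrite /c2iv Jp Jm; exact: (minimal_left_ideal_idempotents_disjoint
    X_hausdorff X_compact E_closed E_comp Mp_min Mm_min).
have c2i_iff : c2i <-> ~ c1i by [].
by case: (pselect (Mp = Mm)); tauto.
Qed.
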